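(* Let $n$ be a positive integer and let $w_1 \le w_2 \le \dots \le w_m$ be a feasible partition of $n$. Then $w_1 = 1$.
   Context: For a positive integer $n$, call a multiset of positive integers $\{w_1,\dots,w_k\}$ with $w_1+\dots+w_k=n$ a weighing partition of $n$ if every integer $\ell$ with $1\le \ell\le n$ can be written as $\ell=\sum_{j=1}^k u_j w_j$ with each $u_j\in\{-1,0,1\}$; this models weighing $\ell$ kg of goods in one weighing on a two-pan balance, with weights allowed on both pans. Let $m=m(n)$ be the minimum number of parts of a weighing partition of $n$. A feasible partition of $n$ is a weighing partition of $n$ with exactly $m$ parts, written in nondecreasing order $w_1\le w_2\le\dots\le w_m$. *)

From mathcomp Require Import all_boot all_order all_algebra.
Set Implicit Arguments. Unset Strict Implicit. Unset Printing Implicit Defensive.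
Import Order.TTheory GRing.Theory Num.Theory.
Local Open Scope ring_scope.

(* A multiset of positive integers is represented by a seq nat (order irrelevant). *)

Definition representable (w : seq nat) (l : nat) : Prop :=
  exists u : seq int,
    size u = size w /\
    all (fun x : int => (x == -1) || (x == 0) || (x == 1)) u /\
    \sum_(j < size w) nth 0 u j * (nth 0%N w j)%:Z = l%:Z.

Definition weighing_partition (n : nat) (w : seq nat) : Prop :=
  all (fun x => 0 < x)%N w /\ sumn w = n /\
  forall l : nat, (1 <= l <= n)%N -> representable w l.

Definition feasible_partition (n : nat) (w : seq nat) : Prop :=
  weighing_partition n w /\
  (forall w' : seq nat, weighing_partition n w' -> (size w <= size w')%N) /\
  sorted leq w.

From mathcomp Require Import all_boot all_order all_algebra.
From mathcomp Require Import zify.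

Set Implicit Arguments.
Unset Strict Implicit.
Unset Printing Implicit Defensive.
Import Order.TTheory GRing.Theory Num.Theory.

(* Indeed, if u represents n - 1 then the coefficients 1 - u_j lie
   in {0, 1, 2} and weigh exactly n - (n - 1) = 1; if all weights were at
   least 2, every such combination would be 0 or at least 2.  Sorting then
   puts that weight 1 first. *)

Local Open Scope ring_scope.

Lemma sum_nth_Posz (w : seq nat) :
  \sum_(j < size w) (nth 0%N w j)%:Z = (sumn w)%:Z.
Proof.
rewrite -(big_mkord xpredT (fun j => (nth 0%N w j)%:Z)) -(big_nth 0%N xpredT Posz).
by rewrite sumnE (big_morph Posz PoszD (erefl _)).
Qed.

Lemma sum_ne1_zero_or_ge2 (I : Type) (r : seq I) (F : I -> int) :
  (forall i, (F i == 0) || (2 <= F i)) -> \sum_(i <- r) F i != 1.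
Proof.
move=> hF.
have : (fun x : int => (x == 0) || (2 <= x)) (\sum_(i <- r) F i).
  apply: (big_ind (fun x : int => (x == 0) || (2 <= x))) => //.
  by move=> x y /orP[] hx /orP[] hy; apply/orP; lia.
by case/orP=> h; apply/eqP => sum1; rewrite sum1 in h.
Qed.

Lemma representable_complement (w : seq nat) (l : nat) (u : seq int) :
    \sum_(j < size w) nth 0 u j * (nth 0%N w j)%:Z = l%:Z ->
  \sum_(j < size w) (1 - nth 0 u j) * (nth 0%N w j)%:Z = (sumn w)%:Z - l%:Z.
Proof.
move=> hl; rewrite -sum_nth_Posz -hl -sumrB.
by apply: eq_bigr => j _; rewrite mulrBl mul1r.
Qed.

Lemma balance_coef_complement_mul (x : int) (a : nat) :
    (x == -1) || (x == 0) || (x == 1) -> (2 <= a)%N ->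
  ((1 - x) * a%:Z == 0) || (2 <= (1 - x) * a%:Z).
Proof.
move=> /orP[/orP[]|] /eqP-> a_ge2; rewrite ?subr0 ?subrr ?opprK ?mul1r ?mul0r //.
all: by apply/orP; right; lia.
Qed.

Lemma weighing_partition_mem1 (n : nat) (w : seq nat) :
  (0 < n)%N -> weighing_partition n w -> (1 \in w)%N.
Proof.
move=> n_gt0 [w_pos [sum_w rep]]; subst n; apply/negPn/negP => w_no1.
have w_ge2 x : x \in w -> (2 <= x)%N.
  move=> xw; have /allP/(_ x xw) := w_pos.
  by have := memPn w_no1 x xw; lia.
have sum_ge2 : (2 <= sumn w)%N.
  case: w n_gt0 w_ge2 {w_pos rep w_no1} => [|a s] //= _ /(_ a).
  by rewrite inE eqxx => /(_ isT); lia.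
have [|u [su [u_coef u_sum]]] := rep (sumn w).-1; first by apply/andP; lia.
have := representable_complement u_sum.
have -> : (sumn w)%:Z - ((sumn w).-1)%:Z = 1 by lia.
move=> /eqP; apply/negP; apply: sum_ne1_zero_or_ge2 => j.
apply: balance_coef_complement_mul.
  by apply: (allP u_coef); rewrite mem_nth // su ltn_ord.
by apply: w_ge2; rewrite mem_nth.
Qed.

Lemma head_sorted_mem1 (w : seq nat) :
  all (fun x => 0 < x)%N w -> sorted leq w -> (1 \in w)%N -> head 0%N w = 1%N.
Proof.
case: w => [|a s] //= /andP[a_pos _] s_sorted; rewrite inE => /orP[/eqP -> //|one_s].
by have /allP/(_ 1%N one_s) := order_path_min leq_trans s_sorted; lia.
Qed.

Theorem theorem1 (n : nat) (w : seq nat) :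
  (0 < n)%N -> feasible_partition n w -> head 0%N w = 1%N.
Proof.
move=> n_gt0 [wp [_ w_sorted]].
apply: head_sorted_mem1 w_sorted (weighing_partition_mem1 n_gt0 wp).
by case: wp.
Qed.
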